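(* Let $\mathcal H$ be a Hilbert space over $\mathbb K\in\{\mathbb R,\mathbb C\}$ and let $\mathbf{x},\mathbf{y}\in\mathcal H$ be norm one vectors. Then there is a (nonzero) continuous symmetric bilinear form $T:\mathcal H\times\mathcal H\to\mathbb K$ that attains its norm at $(\mathbf{x},\mathbf{y})$.
   Context: The norm of a bilinear form is $\|T\|=\sup\{|T(\mathbf{w}_1,\mathbf{w}_2)|:\|\mathbf{w}_1\|,\|\mathbf{w}_2\|\le1\}$, and $T$ attains its norm at $(\mathbf{x},\mathbf{y})$ if $|T(\mathbf{x},\mathbf{y})|=\|T\|$. Bilinear means $\mathbb K$-bilinear. *)

From mathcomp Require Import all_boot all_order all_algebra.
From mathcomp Require Import all_classical all_reals all_analysis.
From mathcomp Require Import complex.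
Import Order.TTheory GRing.Theory Num.Theory ComplexField.
Import numFieldNormedType.Exports.
Local Open Scope ring_scope.

Set Implicit Arguments. Unset Strict Implicit. Unset Printing Implicit Defensive.

(* A Hilbert space over K is a complete normed space V over K (the library's
   [completeNormedModType K]) whose norm is induced by an inner product [ip]:
   [ip] is linear in its first argument, conjugate-symmetric w.r.t. the field
   conjugation [conj] (the identity for K = R, complex conjugation for K = C),
   and satisfies  ||v||^2 = <v, v>  (which gives positive definiteness). *)
Definition is_inner_product (K : numFieldType) (conj : K -> K)
    (V : normedModType K) (ip : V -> V -> K) : Prop :=
  [/\ (forall (a : K) (u v w : V), ip (a *: u + v) w = a * ip u w + ip v w),
      (forall u v : V, ip u v = conj (ip v u)) &
      (forall v : V, `|v| ^+ 2 = ip v v)].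

Definition bilinear_form (K : numFieldType) (V : normedModType K)
    (T : V -> V -> K) : Prop :=
  (forall (a : K) (u v w : V), T (a *: u + v) w = a * T u w + T v w) /\
  (forall (a : K) (u v w : V), T w (a *: u + v) = a * T w u + T w v).

Definition symmetric_form (K : numFieldType) (V : normedModType K)
    (T : V -> V -> K) : Prop := forall u v : V, T u v = T v u.

Definition continuous_form (K : numFieldType) (V : normedModType K)
    (T : V -> V -> K) : Prop := continuous (fun p : V * V => T p.1 p.2).

(* T attains its norm ||T|| = sup {|T(w1,w2)| : ||w1||, ||w2|| <= 1} at (x,y):
   since x, y lie in the closed unit ball, |T(x,y)| = ||T|| says exactly that
   |T(x,y)| is the largest element of that set of values. *)
Definition attains_norm_at (K : numFieldType) (V : normedModType K)
    (T : V -> V -> K) (x y : V) : Prop :=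
  `|x| <= 1 /\ `|y| <= 1 /\
  (forall w1 w2 : V, `|w1| <= 1 -> `|w2| <= 1 -> `|T w1 w2| <= `|T x y|).

Definition prop23_for (K : numFieldType) (conj : K -> K) : Prop :=
  forall (V : completeNormedModType K) (ip : V -> V -> K),
    is_inner_product conj ip ->
    forall x y : V, `|x| = 1 -> `|y| = 1 ->
      exists T : V -> V -> K,
        [/\ bilinear_form T, symmetric_form T, continuous_form T,
            (exists u v : V, T u v != 0) & attains_norm_at T x y].

From Pilot Require Import Defs.
From mathcomp Require Import all_boot all_order all_algebra.
From mathcomp Require Import all_classical all_reals all_analysis.
From mathcomp Require Import complex.
From mathcomp Require Import ring.
Import Order.TTheory GRing.Theory Num.Theory ComplexField.
Import numFieldNormedType.Exports.
Local Open Scope ring_scope.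

Set Implicit Arguments. Unset Strict Implicit. Unset Printing Implicit Defensive.

(* Pick a unimodular om with om <y, x> = |<y, x>| =: r.  Then e = x + om y and
   f = x - om y are orthogonal, |e|^2 = 2(1 + r) and |f|^2 = 2(1 - r).  The form
   T(u, v) = <u, e><v, e>/|e|^2 - <u, f><v, f>/|f|^2 is K-bilinear (the inner
   product is linear in its first argument) and symmetric; AM-GM and Bessel's
   inequality for {e, f} give 2|T(u, v)| <= |u|^2 + |v|^2, so ||T|| <= 1, while
   T(x, y) = conj om has modulus 1. *)

Lemma exists_phase (K : numFieldType) (z : K) :
  exists2 om : K, `|om| = 1 & om * z = `|z|.
Proof.
have [->|z0] := eqVneq z 0; first by exists 1; rewrite ?normr1 // mulr0 normr0.
by exists (`|z| / z); rewrite ?divfK // normf_div normr_id divff ?normr_eq0.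
Qed.

Section Conjugation.
Variables (K : numFieldType) (conj : {rmorphism K -> K}).
Hypothesis mul_conj : forall a, a * conj a = `|a| ^+ 2.

Lemma conj_ge0 a : 0 <= a -> conj a = a.
Proof.
rewrite le0r => /orP[/eqP->|a0]; first exact: rmorph0.
by apply: (mulfI (lt0r_neq0 a0)); rewrite mul_conj ger0_norm ?ltW.
Qed.

Section InnerProduct.
Variables (V : normedModType K) (ip : V -> V -> K).
Hypothesis ip_inner : is_inner_product conj ip.

Lemma ipC u v : ip u v = conj (ip v u). Proof. by case: ip_inner. Qed.

Lemma ipvv v : ip v v = `|v| ^+ 2. Proof. by case: ip_inner. Qed.

Lemma ipL a u v w : ip (a *: u + v) w = a * ip u w + ip v w.
Proof. by case: ip_inner. Qed.

Lemma ip0l w : ip 0 w = 0.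
Proof.
have := ipL 1 0 0 w; rewrite scaler0 addr0 mul1r -{1}[ip 0 w]add0r.
by move=> /addIr <-.
Qed.

Lemma ipDl u v w : ip (u + v) w = ip u w + ip v w.
Proof. by rewrite -{1}[u]scale1r ipL mul1r. Qed.

Lemma ipZl a u w : ip (a *: u) w = a * ip u w.
Proof. by rewrite -[a *: u]addr0 ipL ip0l addr0. Qed.

Lemma ipBl u v w : ip (u - v) w = ip u w - ip v w.
Proof. by rewrite ipDl -scaleN1r ipZl mulN1r. Qed.

Lemma ip0r w : ip w 0 = 0. Proof. by rewrite ipC ip0l rmorph0. Qed.

Lemma ipDr u v w : ip w (u + v) = ip w u + ip w v.
Proof. by rewrite ipC ipDl rmorphD -!ipC. Qed.

Lemma ipZr a u w : ip w (a *: u) = conj a * ip w u.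
Proof. by rewrite ipC ipZl rmorphM -ipC. Qed.

Lemma ipBr u v w : ip w (u - v) = ip w u - ip w v.
Proof. by rewrite ipC ipBl rmorphB -!ipC. Qed.

Lemma pythagoras u v : ip u v = 0 -> `|u + v| ^+ 2 = `|u| ^+ 2 + `|v| ^+ 2.
Proof.
move=> uv; have vu : ip v u = 0 by rewrite ipC uv rmorph0.
by rewrite -!ipvv ipDl !ipDr uv vu addr0 add0r.
Qed.

Definition proj_on (e u : V) : V := (ip u e / `|e| ^+ 2) *: e.

Lemma ip_proj_on e u : ip (proj_on e u) e = ip u e.
Proof.
have [->|e0] := eqVneq e 0; first by rewrite /proj_on !ip0r.
by rewrite ipZl ipvv divfK // expf_neq0 // normr_eq0.
Qed.

Lemma ip_proj_on_orth e f u : ip e f = 0 -> ip (proj_on e u) f = 0.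
Proof. by rewrite ipZl => ->; rewrite mulr0. Qed.

Lemma norm_proj_on e u : `|proj_on e u| ^+ 2 = `|ip u e| ^+ 2 / `|e| ^+ 2.
Proof.
rewrite normrZ normf_div normrX normr_id.
have [->|e0] := eqVneq e 0.
  by rewrite normr0 expr0n /= invr0 !mulr0 expr0n.
by field; rewrite normr_eq0.
Qed.

Lemma bessel2 u e f : ip e f = 0 ->
  `|ip u e| ^+ 2 / `|e| ^+ 2 + `|ip u f| ^+ 2 / `|f| ^+ 2 <= `|u| ^+ 2.
Proof.
move=> ef; have fe : ip f e = 0 by rewrite ipC ef rmorph0.
rewrite -!norm_proj_on.
set pe := proj_on e u; set pf := proj_on f u; set p := u - pe - pf.
have p_e : ip p e = 0 by rewrite !ipBl ip_proj_on ip_proj_on_orth // subrr subr0.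
have p_f : ip p f = 0 by rewrite !ipBl ip_proj_on ip_proj_on_orth // subr0 subrr.
have p_pf : ip p pf = 0 by rewrite ipZr p_f mulr0.
have ppf_pe : ip (p + pf) pe = 0.
  by rewrite ipDl !ipZr p_e ip_proj_on_orth // !mulr0 addr0.
have <- : p + pf + pe = u by rewrite /p !subrK.
rewrite (pythagoras ppf_pe) (pythagoras p_pf).
by rewrite addrAC -addrA lerDr exprn_ge0.
Qed.

Lemma normr_ip_le u e : `|ip u e| <= `|u| * `|e|.
Proof.
have [->|e0] := eqVneq e 0; first by rewrite ip0r !normr0 mulr0.
have := bessel2 u (ip0r e); rewrite ip0r normr0 expr0n /= mul0r addr0.
have e2_gt0 : 0 < `|e| ^+ 2 by rewrite exprn_gt0 // normr_gt0.
by rewrite ler_pdivrMr // -exprMn ler_pXn2r // nnegrE mulr_ge0.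
Qed.

Lemma ip_continuous_l e : continuous (ip ^~ e).
Proof.
move=> u0; apply/cvgrPdist_le => eps eps_gt0.
have e1_gt0 : 0 < `|e| + 1 by rewrite ltr_wpDl.
near=> t; rewrite -ipBl (le_trans (normr_ip_le _ _)) //.
have : `|u0 - t| <= eps / (`|e| + 1).
  by near: t; apply: cvgr_dist_le => //; rewrite divr_gt0.
rewrite ler_pdivlMr // => /(le_trans _); apply.
by rewrite ler_wpM2l // lerDl.
Unshelve. all: by end_near.
Qed.

Definition rank_two_form (e f u v : V) : K :=
  ip u e * ip v e / `|e| ^+ 2 - ip u f * ip v f / `|f| ^+ 2.

Lemma rank_two_form_bilinear e f : bilinear_form (rank_two_form e f).
Proof. by split=> a u v w; rewrite /rank_two_form !ipL; ring. Qed.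

Lemma rank_two_form_sym e f : Defs.symmetric_form (rank_two_form e f).
Proof.
by move=> u v; rewrite /rank_two_form (mulrC (ip u e)) (mulrC (ip u f)).
Qed.

Lemma rank_two_form_continuous e f : continuous_form (rank_two_form e f).
Proof.
have ip_fst g : continuous (ip ^~ g \o fst : V * V -> K).
  by move=> q; apply: continuous_comp; [exact: cvg_fst | exact: ip_continuous_l].
have ip_snd g : continuous (ip ^~ g \o snd : V * V -> K).
  by move=> q; apply: continuous_comp; [exact: cvg_snd | exact: ip_continuous_l].
move=> q; apply: cvgB; (apply: cvgM; last exact: cvg_cst);
  by apply: cvgM; [exact: ip_fst | exact: ip_snd].
Qed.

Lemma rank_two_form_norm_le e f u v : ip e f = 0 ->
  `|rank_two_form e f u v| *+ 2 <= `|u| ^+ 2 + `|v| ^+ 2.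
Proof.
move=> ef; set E := `|e| ^+ 2; set F := `|f| ^+ 2.
have E_ge0 : 0 <= E^-1 by rewrite invr_ge0 exprn_ge0.
have F_ge0 : 0 <= F^-1 by rewrite invr_ge0 exprn_ge0.
have amgm (a b : K) : `|a| * `|b| *+ 2 <= `|a| ^+ 2 + `|b| ^+ 2.
  exact: (real_leif_mean_square_scaled (normr_real a) (normr_real b)).1.
have tri : `|rank_two_form e f u v| <=
    `|ip u e| * `|ip v e| / E + `|ip u f| * `|ip v f| / F.
  rewrite (le_trans (ler_normB _ _)) //.
  by rewrite !normrM !normfV /E /F !normrX !normr_id.
apply: le_trans (ler_wMn2r 2 tri) _.
rewrite mulrnDl -[_ / E *+ 2]mulrnAl -[_ / F *+ 2]mulrnAl.
apply: le_trans
  (lerD (ler_wpM2r E_ge0 (amgm _ _)) (ler_wpM2r F_ge0 (amgm _ _))) _.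
have -> : (`|ip u e| ^+ 2 + `|ip v e| ^+ 2) / E
           + (`|ip u f| ^+ 2 + `|ip v f| ^+ 2) / F
         = (`|ip u e| ^+ 2 / E + `|ip u f| ^+ 2 / F)
           + (`|ip v e| ^+ 2 / E + `|ip v f| ^+ 2 / F).
  by ring.
exact: lerD (bessel2 u ef) (bessel2 v ef).
Qed.

Lemma rank_two_form_le1 e f u v : ip e f = 0 -> `|u| <= 1 -> `|v| <= 1 ->
  `|rank_two_form e f u v| <= 1.
Proof.
move=> ef u1 v1; rewrite -(ler_pMn2r (n := 2)) //.
rewrite (le_trans (rank_two_form_norm_le u v ef)) //.
by rewrite mulr2n lerD // exprn_ile1.
Qed.

Lemma exists_orthogonal_norming_pair x y : `|x| = 1 -> `|y| = 1 ->
  exists e f, ip e f = 0 /\ `|rank_two_form e f x y| = 1.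
Proof.
move=> x1 y1; set z := ip y x; set r := `|z|.
have [om om1 omz] := exists_phase z; rewrite -/r in omz.
have om_conj : om * conj om = 1 by rewrite mul_conj om1 expr1n.
have zE : z = conj om * r by rewrite -omz mulrA (mulrC (conj om)) om_conj mul1r.
have conj_zE : conj z = om * r.
  by rewrite -[conj z]mul1r -om_conj -mulrA -rmorphM omz conj_ge0 // normr_ge0.
have xx : ip x x = 1 by rewrite ipvv x1 expr1n.
have yy : ip y y = 1 by rewrite ipvv y1 expr1n.
have xy : ip x y = om * r by rewrite ipC -/z conj_zE.
set e := x + om *: y; set f := x - om *: y.
have xe : ip x e = 1 + r.
  by rewrite /e ipDr ipZr xx xy mulrA (mulrC (conj om)) om_conj mul1r.
have ye : ip y e = conj om * (1 + r) by rewrite /e ipDr ipZr yy -/z zE; ring.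
have xf : ip x f = 1 - r.
  by rewrite /f ipBr ipZr xx xy mulrA (mulrC (conj om)) om_conj mul1r.
have yf : ip y f = - conj om * (1 - r) by rewrite /f ipBr ipZr yy -/z zE; ring.
have ef : ip e f = 0 by rewrite {1}/e ipDl ipZl xf yf mulrA mulrN om_conj; ring.
have e2 : `|e| ^+ 2 = (1 + r) *+ 2.
  by rewrite -ipvv {1}/e ipDl ipZl xe ye mulrA om_conj; ring.
have f2 : `|f| ^+ 2 = (1 - r) *+ 2.
  by rewrite -ipvv {1}/f ipBl ipZl xf yf mulrA mulrN om_conj; ring.
(* If r = 1 then f = 0 and a = 1 - r = 0: both sides vanish since x / 0 = 0. *)
have half (a c : K) : a * (c * a) / (a *+ 2) = c * a / 2.
  have [->|a0] := eqVneq a 0; first by rewrite !mulr0 !mul0r.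
  by field; rewrite a0 ?pnatr_eq0.
have Txy : rank_two_form e f x y = conj om.
  by rewrite /rank_two_form xe ye xf yf e2 f2 !half; field; rewrite ?pnatr_eq0.
exists e, f; split=> //; rewrite Txy.
by have := congr1 Num.norm om_conj; rewrite normrM om1 mul1r normr1.
Qed.

End InnerProduct.

Lemma prop23_for_conj : prop23_for conj.
Proof.
move=> V ip ip_inner x y x1 y1.
have [e [f [ef Txy]]] := exists_orthogonal_norming_pair ip_inner x1 y1.
exists (rank_two_form ip e f); split.
- exact: rank_two_form_bilinear.
- exact: rank_two_form_sym.
- exact: rank_two_form_continuous.
- by exists x, y; rewrite -normr_eq0 Txy oner_neq0.
split; first by rewrite x1.
split; first by rewrite y1.
by move=> w1 w2 w1_le1 w2_le1; rewrite Txy rank_two_form_le1.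
Qed.

End Conjugation.

Theorem proposition2p3 :
  (forall R : realType, prop23_for (@id R)) /\
  (forall R : realType, prop23_for (fun z : R[i] => z^*)).
Proof.
split=> R.
  apply: (@prop23_for_conj R idfun) => a /=.
  by rewrite -expr2 real_normK ?num_real.
by apply: (@prop23_for_conj R[i] Num.conj_op) => a; rewrite normCK.
Qed.
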